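(* Let $n\ge1$ be an integer, $I,\Lambda$ non-empty sets, $P$ a $\Lambda\times I$ matrix with entries in $\mathbb{Z}_{n}\cup\{\mathbf{0}\}$, and $S=M^{0}[\mathbb{Z}_{n};I,\Lambda;P]$. Let $A$ be a finite alphabet, $\varphi:A\to S$ any map, and $\bar\varphi:A^{+}\to S$ its unique extension to a semigroup morphism. Then for every non-zero element $s=(i,g,\lambda)\in S$, the language $s\bar\varphi^{-1}\subseteq A^{+}$ has generalised star-height at most $1$.
   Context: $\mathbb{Z}_n$ is the cyclic group of order $n$ written additively. For a group $G$, non-empty sets $I,\Lambda$ and a $\Lambda\times I$ matrix $P=(p_{\lambda i})$ with entries in $G\cup\{\mathbf{0}\}$ ($\mathbf{0}$ a new symbol), the Rees zero-matrix semigroup $M^{0}[G;I,\Lambda;P]$ is $(I\times G\times\Lambda)\cup\{\mathbf{0}\}$ with $(i,g,\lambda)(j,h,\mu)=(i,g\,p_{\lambda j}\,h,\mu)$ if $p_{\lambda j}\ne\mathbf{0}$, $=\mathbf{0}$ if $p_{\lambda j}=\mathbf{0}$, and $x\mathbf{0}=\mathbf{0}x=\mathbf{0}$. Generalised regular expressions over $A$: $\emptyset$, $\varepsilon$ and each letter are expressions; if $E,F$ are expressions so are $E\cup F$, $EF$, $E^{\ast}$, $E^{c}$ (complement in $A^{\ast}$). Star-height: $h(\emptyset)=h(\varepsilon)=h(a)=0$, $h(E\cup F)=h(EF)=\max\{h(E),h(F)\}$, $h(E^{\ast})=h(E)+1$, $h(E^{c})=h(E)$; the star-height of a language is the minimum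 of $h(E)$ over expressions $E$ representing it. *)

From HB Require Import structures.
From mathcomp Require Import all_boot all_order all_algebra.
Set Implicit Arguments. Unset Strict Implicit. Unset Printing Implicit Defensive.
Import GRing.Theory.

(* Elements: None = the zero 0, Some (i, g, l) = (i, g, l).
   The group G is additive (a zmodType), as Z_n is written additively.
   P : Lambda -> I -> option G, with None playing the role of the symbol 0. *)
Definition rees (G : Type) (I L : Type) := option (I * G * L).

Definition rees_mul (G : zmodType) (I L : Type) (P : L -> I -> option G)
  (x y : rees G I L) : rees G I L :=
  match x, y with
  | Some (i, g, l), Some (j, h, m) =>
      match P l j with
      | Some p => Some (i, (g + p + h)%R, m)
      | None => None
      end
  | _, _ => None
  end.

(* The unique extension of phi : A -> S to a semigroup morphism A^+ -> S,
   represented on all words: None for the empty word (not in A^+),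
   Some (phi a1 ... phi ak) for a nonempty word a1...ak. *)
Definition phibar (G : zmodType) (I L : Type) (P : L -> I -> option G)
  (A : Type) (phi : A -> rees G I L) (w : seq A) : option (rees G I L) :=
  match w with
  | [::] => None
  | a :: t => Some (foldl (rees_mul P) (phi a) (map phi t))
  end.

Definition preimage_lang (G : zmodType) (I L : Type) (P : L -> I -> option G)
  (A : Type) (phi : A -> rees G I L) (s : rees G I L) : seq A -> Prop :=
  fun w => phibar P phi w = Some s.

Inductive gre (A : Type) : Type :=
| GEmpty : gre A
| GEps : gre A
| GLetter : A -> gre A
| GUnion : gre A -> gre A -> gre A
| GConcat : gre A -> gre A -> gre A
| GStar : gre A -> gre A
| GCompl : gre A -> gre A.

Arguments GEmpty {A}.
Arguments GEps {A}.

Inductive star_lang (A : Type) (K : seq A -> Prop) : seq A -> Prop :=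
| star_nil : star_lang K [::]
| star_app u v : K u -> star_lang K v -> star_lang K (u ++ v).

Fixpoint gre_lang (A : Type) (E : gre A) : seq A -> Prop :=
  match E with
  | GEmpty => fun _ => False
  | GEps => fun w => w = [::]
  | GLetter a => fun w => w = [:: a]
  | GUnion E F => fun w => gre_lang E w \/ gre_lang F w
  | GConcat E F => fun w => exists u v, w = u ++ v /\ gre_lang E u /\ gre_lang F v
  | GStar E => star_lang (gre_lang E)
  | GCompl E => fun w => ~ gre_lang E w
  end.

Fixpoint star_height (A : Type) (E : gre A) : nat :=
  match E with
  | GEmpty | GEps | GLetter _ => 0
  | GUnion E F | GConcat E F => maxn (star_height E) (star_height F)
  | GStar E => (star_height E).+1
  | GCompl E => star_height E
  end.

Definition gsh_le (A : Type) (K : seq A -> Prop) (k : nat) : Prop :=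
  exists E : gre A, star_height E <= k /\ forall w, gre_lang E w <-> K w.

From mathcomp Require Import all_boot all_order all_algebra.
From Stdlib Require Import Classical.
Set Implicit Arguments. Unset Strict Implicit. Unset Printing Implicit Defensive.

(* A non-empty word a_1 ... a_k maps to the non-zero element (i, g, λ) iff phi a_1 lies in
   row i, phi a_k lies in column λ, every adjacent pair a_t a_(t+1) has a non-zero sandwich
   entry p_t, and the group entries of the phi a_t together with the p_t add up to g in Z_n.
   The first three conditions define star-free languages.  The sum is a linear combination of
   the numbers of occurrences of letters a and of two-letter factors ab in the word.  For such
   a count c, if Y is the star-free language {c = 0} and {c = k+1} = {c = k} Z for a star-free
   Z, then {c = k} = Y Z^k and {c = r (mod n)} = Y Z^r (Z^n)^*, of star-height 1.  The
   condition on the sum is a finite Boolean combination of such residue languages. *)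

Section Languages.
Variable A : Type.
Implicit Types (K : seq A -> Prop) (Pr : Prop) (s u v w z : seq A).

Definition conc K1 K2 : seq A -> Prop := fun w => exists u v, w = u ++ v /\ K1 u /\ K2 v.
Definition factor K : seq A -> Prop := fun w => exists u z v, w = u ++ z ++ v /\ K z.

Definition letter (Q : A -> Prop) : seq A -> Prop := fun w => exists2 x, w = [:: x] & Q x.
Definition pairs (R : A -> A -> Prop) : seq A -> Prop :=
  fun w => exists a b, w = [:: a; b] /\ R a b.

Fixpoint lpow K j : seq A -> Prop :=
  if j is j'.+1 then conc K (lpow K j') else fun w => w = [::].

Lemma gsh_ext K K' k : (forall w, K w <-> K' w) -> gsh_le K k -> gsh_le K' k.
Proof. by move=> KK' [E [hE HE]]; exists E; split=> // w; rewrite HE. Qed.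

Lemma gsh_mono K k k' : k <= k' -> gsh_le K k -> gsh_le K k'.
Proof. by move=> le_kk' [E [hE HE]]; exists E; split=> //; apply: leq_trans le_kk'. Qed.

Lemma gsh_word s k : gsh_le (fun w => w = s) k.
Proof.
elim: s => [|a s [E [hE HE]]]; first by exists GEps.
exists (GConcat (GLetter a) E); split=> [|w /=]; first by rewrite /= max0n.
by split=> [[_ [v [-> [-> /HE ->]]]] | ->] //; exists [:: a], s; do !split=> //; apply/HE.
Qed.

Lemma gsh_const Pr k : gsh_le (fun _ : seq A => Pr) k.
Proof.
case: (classic Pr) => HP; [exists (GCompl GEmpty) | exists GEmpty]; split=> // w /=; tauto.
Qed.

Lemma gsh_union K1 K2 k :
  gsh_le K1 k -> gsh_le K2 k -> gsh_le (fun w => K1 w \/ K2 w) k.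
Proof.
move=> [E [hE HE]] [F [hF HF]]; exists (GUnion E F).
by split=> [|w /=]; [rewrite /= geq_max hE hF | rewrite HE HF].
Qed.

Lemma gsh_conc K1 K2 k : gsh_le K1 k -> gsh_le K2 k -> gsh_le (conc K1 K2) k.
Proof.
move=> [E [hE HE]] [F [hF HF]]; exists (GConcat E F).
split=> [|w /=]; first by rewrite /= geq_max hE hF.
by split=> -[u [v [-> [/HE Eu /HF Fv]]]]; exists u, v.
Qed.

Lemma gsh_compl K k : gsh_le K k -> gsh_le (fun w => ~ K w) k.
Proof. by move=> [E [hE HE]]; exists (GCompl E); split=> // w /=; rewrite HE. Qed.

Lemma gsh_inter K1 K2 k :
  gsh_le K1 k -> gsh_le K2 k -> gsh_le (fun w => K1 w /\ K2 w) k.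
Proof.
move=> h1 h2; apply: gsh_ext (gsh_compl (gsh_union (gsh_compl h1) (gsh_compl h2))).
by move=> w; split=> [|[K1w K2w] []//]; case: (classic (K1 w)); case: (classic (K2 w)); tauto.
Qed.

Lemma gsh_factor K k : gsh_le K k -> gsh_le (factor K) k.
Proof.
move=> hK; have := gsh_conc (gsh_const True k) (gsh_conc hK (gsh_const True k)).
apply: gsh_ext => w; split=> [[u [_ [-> [_ [z [v [-> [Kz _]]]]]]]] | [u [z [v [-> Kz]]]]].
  by exists u, z, v.
by exists u, (z ++ v); do !split=> //; exists z, v.
Qed.

Lemma gsh_pow K j k : gsh_le K k -> gsh_le (lpow K j) k.
Proof. by move=> hK; elim: j => [|j IH] /=; [exists GEps | apply: gsh_conc]. Qed.

Lemma gsh_star K : gsh_le K 0 -> gsh_le (star_lang K) 1.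
Proof.
move=> [E [hE HE]]; exists (GStar E); split=> [|w /=]; first by rewrite /= ltnS.
by split; elim=> [|u v Ku _ IH]; constructor=> //; apply/HE.
Qed.

Lemma gsh_bigunion (T : finType) (K : T -> seq A -> Prop) k :
  (forall x, gsh_le (K x) k) -> gsh_le (fun w => exists x, K x w) k.
Proof.
move=> hK; suff /(_ (enum T)) : forall s : seq T, gsh_le (fun w => exists2 x, x \in s & K x w) k.
  by apply: gsh_ext => w; split=> [[x _ Kx] | [x Kx]]; [exists x | exists x; rewrite ?mem_enum].
elim=> [|a s IH].
  by apply: gsh_ext (gsh_const False k) => w; split=> // -[].
apply: gsh_ext (gsh_union (hK a) IH) => w; split=> [[Ka|[x xs Kx]]|[x]].
- by exists a; rewrite ?mem_head.
- by exists x; rewrite // inE xs orbT.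
by rewrite inE => /predU1P[-> | xs Kx]; [left | right; exists x].
Qed.

Lemma lpow_add K a b w : lpow K (a + b) w <-> conc (lpow K a) (lpow K b) w.
Proof.
elim: a w => [|a IH] w /=.
  by split=> [Kw | [u [v [-> [-> Kv]]]]] //; exists [::], w.
split=> [[u [v [-> [Ku /IH [x [y [-> [Kx Ky]]]]]]]] | [x [y [-> [[u [v [-> [Ku Kv]]]] Ky]]]]].
  by exists (u ++ x), y; rewrite catA; do !split=> //; exists u, x.
by exists u, (v ++ y); rewrite catA; do !split=> //; apply/IH; exists v, y.
Qed.

Lemma star_lpow K n w : star_lang (lpow K n) w <-> exists q, lpow K (n * q) w.
Proof.
split=> [|[q]].
  elim=> [|u v Ku _ [q Kv]]; first by exists 0; rewrite muln0.
  by exists q.+1; rewrite mulnS; apply/lpow_add; exists u, v.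
elim: q w => [|q IH] w; first by rewrite muln0 => ->; constructor.
by rewrite mulnS => /lpow_add [u [v [-> [Ku /IH Kv]]]]; constructor.
Qed.

Lemma conc_letter_any Q a w : conc (letter Q) (fun _ => True) (a :: w) <-> Q a.
Proof.
split=> [[u [v [Ew [[x Eu Qx] _]]]] | Qa]; first by move: Ew; rewrite Eu => -[->].
by exists [:: a], w; do !split=> //; exists a.
Qed.

Lemma conc_any_letter Q a w : conc (fun _ => True) (letter Q) (a :: w) <-> Q (last a w).
Proof.
split=> [[u [v [Ew [_ [x Ev Qx]]]]] | Qa].
  by rewrite -(last_cons a a w) Ew Ev cats1 last_rcons.
by exists (belast a w), [:: last a w]; rewrite cats1 -lastI; do !split=> //; exists (last a w).
Qed.

Lemma path_factor (e : rel A) a w :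
  path e a w <-> ~ factor (pairs (fun x y => ~~ e x y)) (a :: w).
Proof.
elim: w a => [|b w IH] a /=.
  split=> // _ [u [z [v [Ew [x [y [Ez _]]]]]]].
  by move: Ew; rewrite Ez; case: u => [|c [|d u]].
rewrite -(rwP andP) IH; split=> [[eab nf] [u [z [v [Ew Kz]]]] | nf].
  case: u Ew => [|c u] /= Ew; last by case: Ew => _ Ew; apply: nf; exists u, z, v.
  by move: Kz Ew => [x [y [-> nexy]]] [ax bx _]; rewrite -ax -bx eab in nexy.
split; last by move=> [u [z [v [Ew Kz]]]]; apply: nf; exists (a :: u), z, v; rewrite Ew.
by apply/negPn/negP => nab; apply: nf; exists [::], [:: a; b], w; split=> //; exists a, b.
Qed.

End Languages.

Arguments gsh_const {A} Pr k.

Section Letters.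
Variable A : finType.

Lemma gsh_letter (Q : A -> Prop) k : gsh_le (letter Q) k.
Proof.
have hx x : gsh_le (fun w => w = [:: x] /\ Q x) k.
  by apply: gsh_inter; [apply: gsh_word | apply: gsh_const].
by apply: gsh_ext (gsh_bigunion hx) => w; split=> [[x []]|[x]]; exists x.
Qed.

Lemma gsh_pairs (R : A -> A -> Prop) k : gsh_le (pairs R) k.
Proof.
have ha a := gsh_conc (gsh_letter (eq^~ a) k) (gsh_letter (R a) k).
apply: gsh_ext (gsh_bigunion ha) => w; split.
  by move=> [a [_ [_ [-> [[_ -> ->] [b -> Rab]]]]]]; exists a, b.
by move=> [a [b [-> Rab]]]; exists a, [:: a], [:: b]; do !split=> //; [exists a | exists b].
Qed.

End Letters.

Section Residues.
Variables (A : Type) (n : nat).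
Hypothesis n_gt0 : 0 < n.
Implicit Types (c : seq A -> nat) (Y Z : seq A -> Prop).

Definition sh1_residues c := forall r : 'I_n, gsh_le (fun w => c w %% n = r) 1.

Lemma level_sets_lpow c Y Z :
  (forall w, c w = 0 <-> Y w) ->
  (forall w k, c w = k.+1 <-> conc (fun u => c u = k) Z w) ->
  forall k w, c w = k <-> conc Y (lpow Z k) w.
Proof.
move=> c0 cS; elim=> [|k IH] w.
  rewrite c0; split=> [Yw | [u [_ [-> [Yu ->]]]]]; last by rewrite cats0.
  by exists w, [::]; rewrite cats0.
rewrite cS -addn1; split.
  move=> [u [v [-> [/IH [x [y [-> [Yx Zy]]]] Zv]]]].
  exists x, (y ++ v); rewrite catA; do 2!split=> //.
  by apply/lpow_add; exists y, v; do !split=> //; exists v, [::]; rewrite cats0.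
move=> [x [y [-> [Yx /lpow_add [u [v [-> [Zu [a [_ [-> [Za ->]]]]]]]]]]]].
by exists (x ++ u), a; rewrite cats0 catA; do !split=> //; apply/IH; exists x, u.
Qed.

Lemma sh1_residues_levels c Y Z :
  gsh_le Y 0 -> gsh_le Z 0 ->
  (forall w, c w = 0 <-> Y w) ->
  (forall w k, c w = k.+1 <-> conc (fun u => c u = k) Z w) ->
  sh1_residues c.
Proof.
move=> hY hZ c0 cS r; have levels := level_sets_lpow c0 cS.
have := gsh_conc (gsh_mono (leq0n 1) hY)
          (gsh_conc (gsh_mono (leq0n 1) (gsh_pow r hZ)) (gsh_star (gsh_pow n hZ))).
apply: gsh_ext => w; split.
  move=> [x [_ [-> [Yx [u [v [-> [Zu /star_lpow [q Zv]]]]]]]]].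
  have /levels -> : conc Y (lpow Z (r + n * q)) (x ++ u ++ v).
    by exists x, (u ++ v); do 2!split=> //; apply/lpow_add; exists u, v.
  by rewrite addnC mulnC modnMDl modn_small.
move=> cw; set q := c w %/ n.
have /levels : c w = r + n * q by rewrite addnC mulnC -cw -divn_eq.
move=> [x [_ [-> [Yx /lpow_add [u [v [-> [Zu Zv]]]]]]]].
exists x, (u ++ v); do 2!split=> //; exists u, v; do 2!split=> //.
by apply/star_lpow; exists q.
Qed.

Lemma sh1_residues_bool (b : seq A -> bool) :
  gsh_le (fun w => b w) 1 -> sh1_residues (fun w => b w).
Proof.
move=> hb r; have := gsh_union (gsh_inter hb (gsh_const (1 %% n = r) 1))
                       (gsh_inter (gsh_compl hb) (gsh_const (0 %% n = r) 1)).
by apply: gsh_ext => w; case: (b w); split=> [[[]|[]] | ] //; [left | right].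
Qed.

Lemma sh1_residues_const k : sh1_residues (fun _ => k).
Proof. by move=> r; apply: gsh_const. Qed.

Lemma sh1_residues_of c c1 c2 (f : nat -> nat -> nat) :
  sh1_residues c1 -> sh1_residues c2 ->
  (forall w, c w %% n = f (c1 w %% n) (c2 w %% n)) -> sh1_residues c.
Proof.
move=> h1 h2 cf r.
have hs (s : 'I_n * 'I_n) :=
  gsh_inter (gsh_inter (h1 s.1) (h2 s.2)) (gsh_const (f s.1 s.2 = r) 1).
apply: gsh_ext (gsh_bigunion hs) => w; split=> [[s [[<- <-] <-]] // | <-].
by exists (Ordinal (ltn_pmod (c1 w) n_gt0), Ordinal (ltn_pmod (c2 w) n_gt0)).
Qed.

Lemma sh1_residuesD c1 c2 :
  sh1_residues c1 -> sh1_residues c2 -> sh1_residues (fun w => c1 w + c2 w).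
Proof.
move=> h1 h2; apply: (sh1_residues_of (f := fun a b => (a + b) %% n)) h1 h2 _ => w.
by rewrite modnDm.
Qed.

Lemma sh1_residuesM k c : sh1_residues c -> sh1_residues (fun w => k * c w).
Proof.
move=> hc; apply: (sh1_residues_of (f := fun a _ => (k * a) %% n) hc hc) => w.
by rewrite modnMmr.
Qed.

Lemma sh1_residuesB c1 c2 c3 :
  sh1_residues c2 -> sh1_residues c3 -> (forall w, c1 w + c2 w = c3 w) -> sh1_residues c1.
Proof.
move=> h2 h3 c123.
apply: (sh1_residues_of (f := fun a b => (b + (n - a)) %% n)) h2 h3 _ => w.
have round_up : c2 w + (n - c2 w %% n) = (c2 w %/ n).+1 * n.
  by rewrite {1}(divn_eq (c2 w) n) -addnA subnKC ?mulSnr // ltnW ?ltn_pmod.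
by rewrite modnDml -c123 -addnA round_up addnC modnMDl.
Qed.

Lemma sh1_residues_sum (T : Type) (s : seq T) (Pr : pred T) (F : T -> seq A -> nat) :
  (forall x, Pr x -> sh1_residues (F x)) ->
  sh1_residues (fun w => \sum_(x <- s | Pr x) F x w).
Proof.
move=> hF; elim: s => [|a s IH] r.
  by apply: gsh_ext (sh1_residues_const 0 r) => w; rewrite big_nil.
case Pa: (Pr a).
  by apply: gsh_ext (sh1_residuesD (hF a Pa) IH r) => w; rewrite big_cons Pa.
by apply: gsh_ext (IH r) => w; rewrite big_cons Pa.
Qed.

End Residues.

Section FactorCounts.
Variables (A : eqType) (x y : A).
Implicit Types (u v w : seq A).

Fixpoint count_factor w : nat :=
  if w is a :: t then (if t is b :: _ then (a == x) && (b == y) else false) + count_factor t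
  else 0.

Lemma count_factor_cat_cons u a v :
  count_factor (u ++ a :: v) = count_factor (rcons u a) + count_factor (a :: v).
Proof.
by elim: u => [|b [|c u] IH] //=; rewrite ?addn0 //; move: IH => /= ->; rewrite addnA.
Qed.

Lemma count_factor_last w :
  0 < count_factor w -> exists u v, w = u ++ x :: y :: v /\ count_factor (y :: v) = 0.
Proof.
elim: w => [|a t IH] //=.
case: (posnP (count_factor t)) => [t0 | /IH [u [v [-> cv]]] _]; last by exists (a :: u), v.
rewrite t0 addn0; case: t t0 {IH} => [|b t] //= t0; rewrite lt0b => /andP [/eqP ax /eqP bx].
by subst a b; exists [::], t.
Qed.

Lemma count_factor_eq0 w : count_factor w = 0 <-> ~ exists u v, w = u ++ x :: y :: v.
Proof.
split=> [w0 [u [v Ew]] | nf].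
  by move: w0; rewrite Ew count_factor_cat_cons /= !eqxx addnCA.
case: (posnP (count_factor w)) => // /count_factor_last [u [v [Ew _]]].
by case: nf; exists u, v.
Qed.

Section Distinct.
Hypothesis neq_xy : x != y.

Lemma count_factor_rcons_x u : count_factor (rcons u x) = count_factor u.
Proof.
case/lastP: u => [|u b] //.
have -> : rcons (rcons u b) x = u ++ [:: b; x] by rewrite -!cats1 -catA.
by rewrite count_factor_cat_cons /= (negbTE neq_xy) andbF !addn0.
Qed.

Lemma count_factor_cons_y v : count_factor (y :: v) = count_factor v.
Proof. by case: v => [|c v] //=; rewrite eq_sym (negbTE neq_xy). Qed.

Lemma count_factor_split u v :
  count_factor (u ++ x :: y :: v) = (count_factor u + count_factor v).+1.
Proof.
rewrite count_factor_cat_cons count_factor_rcons_x.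
have -> : count_factor (x :: y :: v) = ((x == x) && (y == y)) + count_factor (y :: v) by [].
by rewrite count_factor_cons_y !eqxx add1n addnS.
Qed.

Lemma count_factor_succ w k :
  count_factor w = k.+1 <->
  exists u v, w = u ++ x :: y :: v /\ count_factor u = k /\ count_factor v = 0.
Proof.
split=> [wk | [u [v [-> [<- v0]]]]]; last by rewrite count_factor_split v0 addn0.
have /count_factor_last [u [v [Ew]]] : 0 < count_factor w by rewrite wk.
rewrite count_factor_cons_y => v0; exists u, v; do !split=> //.
by move: wk; rewrite Ew count_factor_split v0 addn0 => -[].
Qed.

End Distinct.

End FactorCounts.

Definition ends_with (A : eqType) (x : A) (w : seq A) : bool :=
  if w is a :: t then last a t == x else false.

Lemma ends_withP (A : eqType) (x : A) w : ends_with x w <-> exists u, w = rcons u x.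
Proof.
case: w => [|a t] /=; first by split=> // -[[|b u]].
split=> [/eqP <- | [u Ew]]; first by exists (belast a t); rewrite lastI.
by rewrite -(last_cons a a t) Ew last_rcons.
Qed.

Lemma mem_split_last (A : eqType) (x : A) w :
  x \in w -> exists u v, w = u ++ x :: v /\ x \notin v.
Proof.
elim: w => [|a t IH] //; rewrite inE; case xt: (x \in t).
  by move=> _; case: (IH xt) => u [v [-> xv]]; exists (a :: u), v.
by rewrite orbF => /eqP xa; exists [::], t; rewrite -xa xt.
Qed.

Lemma count_mem_succ (A : eqType) (x : A) w k :
  count_mem x w = k.+1 <-> exists u v, w = u ++ x :: v /\ count_mem x u = k /\ x \notin v.
Proof.
split=> [wk | [u [v [-> [<- /count_memPn xv]]]]]; last first.
  by rewrite count_cat /= eqxx xv addn0 addn1.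
have /mem_split_last [u [v [Ew xv]]] : x \in w by rewrite -has_pred1 has_count wk.
exists u, v; do !split=> //; move: wk.
by rewrite Ew count_cat /= eqxx (count_memPn xv) addn0 addn1 => -[].
Qed.

Lemma count_mem_factors (A : finType) (x : A) w :
  count_mem x w = \sum_(y : A) count_factor x y w + ends_with x w.
Proof.
elim: w => [|a t IH]; first by rewrite big1.
rewrite /= big_split /=; case: t IH => [|b t] IH; first by rewrite !big1 //= addn0.
rewrite IH addnA; congr (_ + _ + _).
rewrite (bigD1 b) //= eqxx andbT big1 ?addn0 // => z.
by rewrite eq_sym => /negbTE->; rewrite andbF.
Qed.

Lemma notin_factor (A : eqType) (x : A) w : x \notin w <-> ~ factor (fun z => z = [:: x]) w.
Proof.
split=> [xw [u [z [v [Ew Ez]]]] | nf]; first by rewrite Ew Ez !mem_cat mem_head orbT in xw.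
by apply/negP => /mem_split_last [u [v [Ew _]]]; apply: nf; exists u, [:: x], v.
Qed.

Section CountResidues.
Variables (A : finType) (n : nat).
Hypothesis n_gt0 : 0 < n.

Lemma sh1_residues_count_mem (x : A) : sh1_residues n (fun w : seq A => count_mem x w).
Proof.
have hY : gsh_le (fun w : seq A => x \notin w) 0.
  apply: gsh_ext (gsh_compl (gsh_factor (gsh_word [:: x] 0))) => w.
  exact: iff_sym (notin_factor x w).
apply: (sh1_residues_levels hY (gsh_conc (gsh_word [:: x] 0) hY)) => [w | w k].
  by split=> /count_memPn.
rewrite count_mem_succ; split=> [[u [v [-> [<- xv]]]] | [u [_ [-> [<- [_ [v [-> [-> xv]]]]]]]]].
  by exists u, (x :: v); do !split=> //; exists [:: x], v.
by exists u, v.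
Qed.

Lemma sh1_residues_count_factor_neq (x y : A) :
  x != y -> sh1_residues n (count_factor x y).
Proof.
move=> neq_xy.
have hY : gsh_le (fun w : seq A => count_factor x y w = 0) 0.
  apply: gsh_ext (gsh_compl (gsh_factor (gsh_word [:: x; y] 0))) => w.
  rewrite count_factor_eq0; split=> nf.
    by move=> [u [v Ew]]; apply: nf; exists u, [:: x; y], v.
  by move=> [u [z [v [Ew Ez]]]]; apply: nf; exists u, v; rewrite Ew Ez.
apply: (sh1_residues_levels hY (gsh_conc (gsh_word [:: x; y] 0) hY)) => // w k.
rewrite count_factor_succ //.
split=> [[u [v [-> [<- v0]]]] | [u [_ [-> [<- [_ [v [-> [-> v0]]]]]]]]].
  by exists u, [:: x, y & v]; do !split=> //; exists [:: x; y], v.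
by exists u, v.
Qed.

Lemma sh1_residues_ends_with (x : A) : sh1_residues n (fun w : seq A => ends_with x w).
Proof.
apply: sh1_residues_bool => //.
apply: gsh_ext (gsh_conc (gsh_const True 1) (gsh_word [:: x] 1)) => w.
split=> [[u [_ [-> [_ ->]]]] | /ends_withP [u ->]]; last by exists u, [:: x]; rewrite cats1.
by apply/ends_withP; exists u; rewrite cats1.
Qed.

(* Occurrences of [x x] may overlap, so this count is not of the form handled by
   [sh1_residues_levels]; it is recovered from the count of the letter [x] instead. *)
Lemma sh1_residues_count_factor (x y : A) : sh1_residues n (count_factor x y).
Proof.
case: (eqVneq x y) => [<- | ]; last exact: sh1_residues_count_factor_neq.
apply: (sh1_residuesB n_gt0 (c3 := fun w => count_mem x w)
  (c2 := fun w => \sum_(z | z != x) count_factor x z w + ends_with x w)).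
- apply: (sh1_residuesD n_gt0); last exact: sh1_residues_ends_with.
  apply: (sh1_residues_sum n_gt0) => z zx; apply: sh1_residues_count_factor_neq.
  by rewrite eq_sym.
- exact: sh1_residues_count_mem.
by move=> w; rewrite count_mem_factors [in RHS](bigD1 x) //= addnA.
Qed.

End CountResidues.

Lemma sum_mul_eq (A : finType) (F : A -> nat) a : \sum_(x : A) F x * (a == x) = F a.
Proof.
rewrite (bigD1 a) //= eqxx muln1 big1 ?addn0 // => x.
by rewrite eq_sym => /negbTE->; rewrite muln0.
Qed.

Section ReesWords.
Variables (m : nat) (I L : Type) (P : L -> I -> option 'I_m.+1) (A : finType)
  (phi : A -> rees 'I_m.+1 I L).
Implicit Types (x y : A) (t w : seq A).

Definition in_row i x := exists g l, phi x = Some (i, g, l).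
Definition in_column l y := exists j g, phi y = Some (j, g, l).

Definition link x y : option 'I_m.+1 :=
  if (phi x, phi y) is (Some (_, _, lx), Some (jy, _, _)) then P lx jy else None.

Definition compatible : rel A := fun x y => link x y != None.
Definition link_weight x y : nat := if link x y is Some p then val p else 0.
Definition letter_weight x : nat := if phi x is Some (_, g, _) then val g else 0.

Fixpoint tail_weight x t : nat :=
  if t is y :: t' then link_weight x y + letter_weight y + tail_weight y t' else 0.

Definition word_weight w : nat := if w is x :: t then letter_weight x + tail_weight x t else 0.

Definition letter_sum w : nat := \sum_x letter_weight x * count_mem x w.
Definition link_sum w : nat := \sum_x \sum_y link_weight x y * count_factor x y w.

Lemma letter_sum_cons a t : letter_sum (a :: t) = letter_weight a + letter_sum t.
Proof.
rewrite -(sum_mul_eq letter_weight a) -big_split.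
by apply: eq_bigr => x _; rewrite mulnDr.
Qed.

Lemma link_sum_cons2 a b t : link_sum [:: a, b & t] = link_weight a b + link_sum (b :: t).
Proof.
rewrite -(sum_mul_eq (link_weight^~ b) a) -big_split; apply: eq_bigr => x _.
rewrite (eq_bigr (fun y => link_weight x y * ((a == x) && (b == y))
                          + link_weight x y * count_factor x y (b :: t))); last first.
  by move=> y _; rewrite -mulnDr.
rewrite big_split /=; congr (_ + _); case: (a == x); first by rewrite muln1 sum_mul_eq.
by rewrite muln0 big1 // => y _; rewrite muln0.
Qed.

Lemma link_sum1 a : link_sum [:: a] = 0.
Proof. by rewrite /link_sum big1 // => x _; rewrite big1 // => y _; rewrite muln0. Qed.

Lemma word_weight_counts w : word_weight w = letter_sum w + link_sum w.
Proof.
elim: w => [|a [|b t] IH].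
- rewrite /letter_sum /link_sum !big1 // => x _; rewrite ?muln0 //.
  by rewrite big1 // => y _; rewrite muln0.
- by rewrite letter_sum_cons link_sum1 /letter_sum big1 /= ?addn0 // => x _; rewrite muln0.
rewrite letter_sum_cons link_sum_cons2 /= -addnA.
by rewrite (IH : letter_weight b + tail_weight b t = _) -[RHS]addnA (addnCA (link_weight a b)).
Qed.

Lemma foldl_rees_mul_None s : foldl (rees_mul P) None s = None.
Proof. by elim: s. Qed.

Lemma foldl_rees_mul x lx : in_column lx x -> forall t i0 (g0 : 'I_m.+1) i g l,
  foldl (rees_mul P) (Some (i0, g0, lx)) (map phi t) = Some (i, g, l) <->
  [/\ path compatible x t, i = i0, val g = (val g0 + tail_weight x t) %% m.+1
    & in_column l (last x t)].
Proof.
move=> hx t; elim: t x lx hx => [|y t IH] x lx [jx [gx Ex]] i0 g0 i g l /=.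
  rewrite addn0 modn_small ?ltn_ord //; split=> [[<- <- <-] | [_ -> /val_inj -> [j [gy]]]].
    by split=> //; exists jx, gx.
  by rewrite Ex => -[_ _ ->].
rewrite {1}/compatible /link_weight.
have -> : link x y = if phi y is Some (jy, _, _) then P lx jy else None by rewrite /link Ex.
case Ey: (phi y) => [[[jy gy] ly]|]; last by rewrite foldl_rees_mul_None; split=> // -[].
case: (P lx jy) => [p|] /=; last by rewrite foldl_rees_mul_None; split=> // -[].
rewrite (IH y ly) /letter_weight ?Ey //; last by exists jy, gy.
have -> : val (g0 + p + gy)%R = (val g0 + val p + val gy) %% m.+1 by rewrite /= modnDml.
by rewrite modnDml -!addnA.
Qed.

Lemma preimage_nonzeroP w i (g : 'I_m.+1) l :
  (conc (letter (in_row i)) (fun _ => True) w /\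
   ~ factor (pairs (fun a b => ~~ compatible a b)) w /\
   conc (fun _ => True) (letter (in_column l)) w /\
   word_weight w %% m.+1 = g) <-> preimage_lang P phi (Some (i, g, l)) w.
Proof.
rewrite /preimage_lang; case: w => [|x t] /=.
  by split=> [[[u [v [Ew [[a Eu _] _]]]] _] | //]; move: Ew; rewrite Eu.
rewrite conc_letter_any conc_any_letter -path_factor.
case Ex: (phi x) => [[[jx gx] lx]|]; last first.
  by rewrite foldl_rees_mul_None; split=> [[[g' [l']]] | //]; rewrite Ex.
have hx : in_column lx x by exists jx, gx.
rewrite /letter_weight Ex; split=> [[[g' [l' Ex']] [pth [col wt]]] | [/(foldl_rees_mul hx)]].
  move: Ex'; rewrite Ex => -[<- _ _].
  by congr Some; apply/(foldl_rees_mul hx); split; rewrite ?wt.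
move=> [pth -> wt col]; split; first by exists gx, lx.
by do 2!split=> //; rewrite wt modn_mod.
Qed.

Lemma sh1_residues_word_weight : sh1_residues m.+1 word_weight.
Proof.
have n_gt0 : 0 < m.+1 by [].
have letters : sh1_residues m.+1 letter_sum.
  apply: (sh1_residues_sum n_gt0) => x _; apply: (sh1_residuesM n_gt0).
  exact: sh1_residues_count_mem.
have links : sh1_residues m.+1 link_sum.
  apply: (sh1_residues_sum n_gt0) => x _; apply: (sh1_residues_sum n_gt0) => y _.
  apply: (sh1_residuesM n_gt0); exact: sh1_residues_count_factor.
move=> r; apply: gsh_ext (sh1_residuesD n_gt0 letters links r) => w.
by rewrite word_weight_counts.
Qed.

End ReesWords.

Theorem lemma3p2 (m : nat) (I L : Type) (hI : inhabited I) (hL : inhabited L)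
  (P : L -> I -> option 'I_m.+1) (A : finType) (phi : A -> rees 'I_m.+1 I L)
  (i : I) (g : 'I_m.+1) (l : L) :
  gsh_le (preimage_lang P phi (Some (i, g, l))) 1.
Proof.
apply: gsh_ext => [w | ]; first exact: preimage_nonzeroP.
apply: gsh_inter; first exact: gsh_conc (gsh_letter _ 1) (gsh_const True 1).
apply: gsh_inter; first exact: gsh_compl (gsh_factor (gsh_pairs _ 1)).
apply: gsh_inter; first exact: gsh_conc (gsh_const True 1) (gsh_letter _ 1).
exact: sh1_residues_word_weight.
Qed.
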